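(* For every $n\in\mathbb N$, $$\varphi^*(n)=\sum_{\substack{d\mid n\\ \kappa(d)=\kappa(n)}}\varphi(d).$$
   Context: $\varphi$ is Euler's totient function. $d\mid\mid n$ means $d\mid n$ and $\gcd(d,n/d)=1$; $(j,n)_*=\max\{d: d\mid j,\ d\mid\mid n\}$; $\varphi^*(n)=\#\{1\le j\le n:(j,n)_*=1\}$. $\kappa(n)=\prod_{p\mid n}p$ is the squarefree kernel. *)

From mathcomp Require Import all_boot.
Set Implicit Arguments. Unset Strict Implicit. Unset Printing Implicit Defensive.

Definition unitary_dvd (d n : nat) : bool := (d %| n) && coprime d (n %/ d).

(* (j, n)_* = max { d : d | j, d || n } ; for n >= 1 the max ranges over d <= n *)
Definition ugcd (j n : nat) : nat :=
  \max_(d < n.+1 | (d %| j) && unitary_dvd d n) d.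

Definition utotient (n : nat) : nat :=
  #|[set j : 'I_n.+1 | (0 < (j : nat)) && (ugcd j n == 1)]|.

Definition kernel (n : nat) : nat := \prod_(p <- primes n) p.

From mathcomp Require Import all_boot.

Set Implicit Arguments.
Unset Strict Implicit.
Unset Printing Implicit Defensive.

(* A unitary divisor d > 1 of n contains the full power p ^ logn p n of each of
   its primes, so (j, n)_* = 1 iff no such full prime power of n divides j, that
   is, iff every prime of n divides n / gcd(j, n), that is, iff
   kernel (n / gcd(j, n)) = kernel n.  Grouping 0 <= j < n by the divisor
   d = n / gcd(j, n), which takes each value d exactly totient d times, gives
   the sum. *)

Lemma prime_dvd_kernel p m : prime p -> (p %| kernel m) = (p \in primes m).
Proof.
move=> pp; rewrite /kernel Euclid_dvd_prod //.
have : all prime (primes m) by apply/allP => q; rewrite mem_primes => /andP[].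
elim: (primes m) => [|q s IHs]; first by rewrite big_nil.
by rewrite big_cons in_cons /= => /andP[qp /IHs ->]; rewrite dvdn_prime2.
Qed.

Lemma eq_kernel d n : (kernel d == kernel n) = (primes d == primes n).
Proof.
apply/eqP/eqP => [Ekernel|]; last by rewrite /kernel => ->.
apply: (irr_sorted_eq ltn_trans ltnn); rewrite ?sorted_primes // => p.
have [pp|np] := boolP (prime p); first by rewrite -!prime_dvd_kernel // Ekernel.
by rewrite !mem_primes (negbTE np).
Qed.

Lemma eq_primes_dvdn d n : 0 < n -> d %| n ->
  (primes d == primes n) = all (dvdn^~ d) (primes n).
Proof.
move=> n_gt0 dn; have d_gt0 := dvdn_gt0 n_gt0 dn.
apply/eqP/allP => [<- p | prim_dvd].
  by rewrite mem_primes => /and3P[].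
apply: (irr_sorted_eq ltn_trans ltnn); rewrite ?sorted_primes // => p.
rewrite !mem_primes n_gt0 d_gt0 /=.
apply/andP/andP => [[pp pd] | [pp pn]]; split => //; first exact: dvdn_trans dn.
by apply: prim_dvd; rewrite mem_primes pp n_gt0.
Qed.

Lemma unitary_dvd_pfactor p n : prime p -> 0 < n -> unitary_dvd (p ^ logn p n) n.
Proof.
move=> pp n_gt0; have [m pm Em] := pfactor_coprime pp n_gt0.
by rewrite /unitary_dvd pfactor_dvdnn /= {2}Em mulnK ?expn_gt0 ?prime_gt0 // coprimeXl.
Qed.

Lemma logn_unitary_dvd p d n : prime p -> 0 < n -> unitary_dvd d n -> p %| d ->
  logn p d = logn p n.
Proof.
move=> pp n_gt0 /andP[dn co_d] pd; have d_gt0 := dvdn_gt0 n_gt0 dn.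
have nd_gt0 : 0 < n %/ d by rewrite divn_gt0 // dvdn_leq.
rewrite -[in RHS](divnK dn) mulnC lognM // (@logn_coprime p (n %/ d)) ?addn0 //.
exact: coprime_dvdl pd co_d.
Qed.

Lemma leq_ugcd d j n : d <= n -> d %| j -> unitary_dvd d n -> d <= ugcd j n.
Proof.
rewrite -ltnS => lt_dn dj ud.
apply: (@leq_bigmax_cond _ _ (fun i : 'I_n.+1 => (i : nat)) (Ordinal lt_dn)).
by rewrite /= dj.
Qed.

Lemma ugcd_eq1 j n : 0 < n ->
  (ugcd j n == 1) = all (fun p => ~~ (p ^ logn p n %| j)) (primes n).
Proof.
move=> n_gt0; apply/idP/allP => [/eqP ugcd1 p pn | no_pfactor].
  rewrite mem_primes in pn; case/and3P: pn => pp _ pn.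
  have e_gt0 : 0 < logn p n by rewrite logn_gt0 mem_primes pp n_gt0.
  apply/negP => pe_j.
  have := leq_ugcd (dvdn_leq n_gt0 (pfactor_dvdnn p n)) pe_j
                   (unitary_dvd_pfactor pp n_gt0).
  by rewrite ugcd1 leqNgt -{1}(expn0 p) ltn_exp2l ?prime_gt1 ?e_gt0.
have ud1 : unitary_dvd 1 n by rewrite /unitary_dvd dvd1n /coprime gcd1n.
rewrite eqn_leq (leq_ugcd n_gt0 (dvd1n j) ud1) andbT.
apply/bigmax_leqP => d /= /andP[dj ud]; rewrite leqNgt; apply/negP => d_gt1.
have pp := pdiv_prime d_gt1; have pd := pdiv_dvd d; set p := pdiv d in pp pd.
have pn : p \in primes n.
  by rewrite mem_primes pp n_gt0 (dvdn_trans pd) //; case/andP: ud.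
apply: (negP (no_pfactor p pn)).
by rewrite -(logn_unitary_dvd pp n_gt0 ud pd) (dvdn_trans (pfactor_dvdnn p d)).
Qed.

Lemma pfactor_dvdn_gcdn p j n : prime p -> 0 < n ->
  (p ^ logn p n %| j) = ~~ (p %| n %/ gcdn j n).
Proof.
move=> pp n_gt0; set g := gcdn j n.
have g_gt0 : 0 < g by rewrite gcdn_gt0 n_gt0 orbT.
have gn : g %| n := dvdn_gcdr j n.
have ng_gt0 : 0 < n %/ g by rewrite divn_gt0 // dvdn_leq.
have -> : (p ^ logn p n %| j) = (p ^ logn p n %| g).
  by rewrite dvdn_gcd pfactor_dvdnn andbT.
rewrite pfactor_dvdn // -{1}(divnK gn) mulnC lognM //.
rewrite -[X in _ <= X]addn0 leq_add2l leqn0 eqn0Ngt logn_gt0.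
by rewrite mem_primes pp ng_gt0.
Qed.

Lemma ugcd_eq1_kernel j n : 0 < n ->
  (ugcd j n == 1) = (kernel (n %/ gcdn j n) == kernel n).
Proof.
move=> n_gt0; rewrite ugcd_eq1 // eq_kernel eq_primes_dvdn ?dvdn_div ?dvdn_gcdr //.
apply: eq_in_all => p; rewrite mem_primes => /andP[pp _].
by rewrite pfactor_dvdn_gcdn ?negbK.
Qed.

Lemma sum_nat_dvdn_mul g m (F : nat -> nat) : 0 < g ->
  \sum_(0 <= j < m * g | g %| j) F (j %/ g) = \sum_(0 <= k < m) F k.
Proof.
move=> g_gt0; rewrite big_mkcond big_nat_mul; apply: eq_bigr => k _.
rewrite big_ltn ?ltn_pmul2r // dvdn_mull // mulnK // big_nat_cond big1.
  exact: addn0.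
move=> j /andP[/andP[lt_kg_j lt_j_k1g] _]; case: ifP => // /dvdnP[q Ej].
move: lt_kg_j lt_j_k1g; rewrite Ej !ltn_pmul2r // => lt_kq.
by rewrite ltnS leqNgt lt_kq.
Qed.

Lemma sum_div_gcdn_eq d n : 0 < n -> d %| n ->
  \sum_(0 <= j < n) (n %/ gcdn j n == d) = totient d.
Proof.
move=> n_gt0 dn; set g := n %/ d.
have d_gt0 := dvdn_gt0 n_gt0 dn.
have g_gt0 : 0 < g by rewrite divn_gt0 // dvdn_leq.
have En : n = d * g by rewrite mulnC divnK.
rewrite totient_count_coprime -(sum_nat_dvdn_mul d _ g_gt0) -En [RHS]big_mkcond.
apply: eq_bigr => j _.
have -> : (n %/ gcdn j n == d) = (gcdn j n == g).
  rewrite -eqn_mul ?gcdn_gt0 ?n_gt0 ?orbT ?dvdn_gcdr //.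
  by rewrite {1}En eqn_pmul2l //; apply: eq_sym.
case: ifP => [/dvdnP[k ->] | gNj].
  by rewrite mulnK // En -muln_gcdl -{2}[g]mul1n eqn_pmul2r // /coprime gcdnC.
by case: eqP gNj => // <-; rewrite dvdn_gcdl.
Qed.

Lemma utotientE n : 0 < n ->
  utotient n = \sum_(0 <= j < n) (kernel (n %/ gcdn j n) == kernel n).
Proof.
move=> n_gt0; set f := fun j => kernel (n %/ gcdn j n) == kernel n.
have -> : utotient n = \sum_(1 <= j < n.+1) f j.
  rewrite /utotient -sum1_card big_mkcond /=; under eq_bigr do rewrite inE.
  rewrite -(big_mkord xpredT (fun j => if (0 < j) && (ugcd j n == 1) then 1 else 0)).
  rewrite big_ltn //= add0n; apply: eq_big_nat => j /andP[j_gt0 _].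
  by rewrite j_gt0 ugcd_eq1_kernel.
have f_n : f n = f 0 by rewrite /f gcd0n gcdnn.
by rewrite big_nat_recr // [RHS]big_ltn // f_n addnC.
Qed.

Lemma sum_cond_eq_uniq (T : eqType) (s : seq T) (P : pred T) x :
  uniq s -> x \in s -> \sum_(y <- s | P y) (x == y) = P x.
Proof.
move=> s_uniq xs; rewrite big_mkcond (bigD1_seq x) //= eqxx big1 ?addn0.
  by case: (P x).
by move=> y; rewrite eq_sym => /negbTE ->; case: (P y).
Qed.

Theorem corollary7p3 (n : nat) (hn : 0 < n) :
  utotient n = \sum_(d <- divisors n | kernel d == kernel n) totient d.
Proof.
rewrite utotientE // (eq_bigr (fun j =>
  \sum_(d <- divisors n | kernel d == kernel n) (n %/ gcdn j n == d))) => [|j _].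
  rewrite exchange_big /= big_seq_cond [RHS]big_seq_cond.
  by apply: eq_bigr => d /andP[dn _]; rewrite sum_div_gcdn_eq // dvdn_divisors.
by rewrite sum_cond_eq_uniq ?divisors_uniq // -dvdn_divisors // dvdn_div ?dvdn_gcdr.
Qed.
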